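(* Let $P$ be the poset on ground set $\{x_1,x_2,x_3,x_4,y,z\}$ whose strict comparabilities are exactly $x_1<x_2<x_3<x_4$ (together with those implied by transitivity: $x_1<x_3$, $x_1<x_4$, $x_2<x_4$), $x_1<z$, $x_2<z$, and $y<x_4$; all other pairs of distinct elements are incomparable. Then $P$ is not a unit OC interval order, but $P$ has a unit mixed interval representation, for instance $x_1\mapsto[0,1]$, $x_2\mapsto(1,2)$, $y\mapsto[1,2]$, $x_3\mapsto[2,3)$, $z\mapsto[2,3]$, $x_4\mapsto[3,4]$.
   Context: A finite poset is a unit OC interval order if each element $x$ can be assigned a real interval $I_x$ of length $1$ which is either open $(a,a+1)$ or closed $[a,a+1]$, such that for distinct $x,y$, $x<y$ if and only if $I_x$ and $I_y$ are disjoint and every point of $I_x$ is less than every point of $I_y$. A unit mixed interval representation is defined in the same way except that each $I_x$ may be any of $[a,a+1]$, $(a,a+1)$, $(a,a+1]$, $[a,a+1)$. *)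

From Stdlib Require Import Reals.
Open Scope R_scope.

(* A unit interval of the real line: left endpoint a, length 1, with
   flags saying whether the left/right endpoint is excluded.
   (lopen=false, ropen=false) = [a,a+1], (true,true) = (a,a+1),
   (true,false) = (a,a+1], (false,true) = [a,a+1). *)
Record unit_interval := UI { left_end : R; lopen : bool; ropen : bool }.

Definition in_ui (I : unit_interval) (p : R) : Prop :=
  (if lopen I then left_end I < p else left_end I <= p) /\
  (if ropen I then p < left_end I + 1 else p <= left_end I + 1).

Definition ui_before (I J : unit_interval) : Prop :=
  (forall p, ~ (in_ui I p /\ in_ui J p)) /\
  (forall p q, in_ui I p -> in_ui J q -> p < q).

Definition is_unit_rep {T : Type} (lt : T -> T -> Prop)
  (kind : unit_interval -> Prop) (f : T -> unit_interval) : Prop :=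
  (forall x, kind (f x)) /\
  (forall x y, x <> y -> (lt x y <-> ui_before (f x) (f y))).

Definition oc_kind (I : unit_interval) : Prop :=
  (lopen I = false /\ ropen I = false) \/ (lopen I = true /\ ropen I = true).

Definition mixed_kind (I : unit_interval) : Prop := True.

Definition unit_OC_interval_order {T : Type} (lt : T -> T -> Prop) : Prop :=
  exists f, is_unit_rep lt oc_kind f.

Definition has_unit_mixed_rep {T : Type} (lt : T -> T -> Prop) : Prop :=
  exists f, is_unit_rep lt mixed_kind f.

Inductive elt := x1 | x2 | x3 | x4 | y | z.

Definition P_lt (u v : elt) : Prop :=
  match u, v with
  | x1, x2 | x2, x3 | x3, x4 | x1, x3 | x1, x4 | x2, x4 => True
  | x1, z | x2, z => True
  | y, x4 => True
  | _, _ => False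
  end.

Definition P_mixed_rep (u : elt) : unit_interval :=
  match u with
  | x1 => UI 0 false false
  | x2 => UI 1 true true
  | y  => UI 1 false false
  | x3 => UI 2 false true
  | z  => UI 2 false false
  | x4 => UI 3 false false
  end.

(* A unit interval [I] starting at [a] lies before a unit interval [J]
   starting at [b] exactly when [a + 1 < b], or [a + 1 = b] and the two
   intervals do not share the touching endpoint (one of them omits it).
   This characterization ([ui_before_iff]) reduces every question about
   the order represented by unit intervals to linear arithmetic on left
   endpoints plus a look at endpoint flags.

   For the poset P, any unit representation (of any interval kinds) is
   then rigid: the comparabilities x1<x2<x3<x4 and the incomparabilities
   x1||y, y||x3, y||z, z||x4 force the left endpoints into
   a4 = a3 + 1 = ay + 2 = az + 1, and the touching-endpoint
   conditions force I(x3) to be left-closed and right-open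
   ([P_rep_x3_half_open]).  Hence no representation uses only open and
   closed intervals, while the explicit half-open representation of the
   statement is checked pair by pair with [ui_before_iff]. *)

From Stdlib Require Import Reals Lra.
Open Scope R_scope.

Lemma in_ui_interior I p : left_end I < p < left_end I + 1 -> in_ui I p.
Proof.
  destruct I as [a [|] [|]]; unfold in_ui; cbn; intros; lra.
Qed.

Lemma in_ui_bounds I p : in_ui I p -> left_end I <= p <= left_end I + 1.
Proof.
  destruct I as [a [|] [|]]; unfold in_ui; cbn; intros; lra.
Qed.

Lemma ui_before_of_lt I J :
  (forall p q, in_ui I p -> in_ui J q -> p < q) -> ui_before I J.
Proof.
  intros Hlt; split; [|exact Hlt].
  intros p [HI HJ]; specialize (Hlt p p HI HJ); lra.
Qed.

(* If all points of I precede all points of J, then J starts no earlier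
   than I ends: otherwise interior points near the overlap contradict it. *)
Lemma before_left_end_le I J :
  (forall p q, in_ui I p -> in_ui J q -> p < q) ->
  left_end I + 1 <= left_end J.
Proof.
  intros Hlt; apply Rnot_lt_le; intros Hoverlap.
  set (t := Rmin 1 (left_end I + 1 - left_end J) / 2).
  assert (Ht : 0 < t <= / 2 /\ 2 * t <= left_end I + 1 - left_end J).
  { pose proof (Rmin_l 1 (left_end I + 1 - left_end J)).
    pose proof (Rmin_r 1 (left_end I + 1 - left_end J)).
    assert (0 < Rmin 1 (left_end I + 1 - left_end J))
      by (apply Rmin_glb_lt; lra).
    unfold t; lra. }
  assert (Hp : in_ui I (left_end I + 1 - t)) by (apply in_ui_interior; lra).
  assert (Hq : in_ui J (left_end J + t)) by (apply in_ui_interior; lra).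
  specialize (Hlt _ _ Hp Hq); lra.
Qed.

Lemma ui_before_iff I J :
  ui_before I J <->
  left_end I + 1 < left_end J \/
  (left_end I + 1 = left_end J /\ (ropen I = true \/ lopen J = true)).
Proof.
  split.
  - intros [Hdisj Hlt].
    destruct (Rle_lt_or_eq_dec _ _ (before_left_end_le I J Hlt)) as [Hgap|Htouch];
      [left; exact Hgap | right; split; [exact Htouch|]].
    destruct (ropen I) eqn:HrI, (lopen J) eqn:HlJ; auto.
    (* both intervals contain the common endpoint *)
    exfalso; apply (Hdisj (left_end I + 1)).
    destruct I as [a lI rI], J as [b lJ rJ]; unfold in_ui; cbn in *; subst.
    destruct lI, rJ; repeat split; lra.
  - intros Hends; apply ui_before_of_lt; intros p q Hp Hq.
    pose proof (in_ui_bounds I p Hp); pose proof (in_ui_bounds J q Hq).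
    destruct Hends as [Hgap|[Htouch [HrI|HlJ]]]; [lra| |].
    + destruct Hp as [_ Hp]; rewrite HrI in Hp; lra.
    + destruct Hq as [Hq _]; rewrite HlJ in Hq; lra.
Qed.

Section RepresentationsOfP.

Variable kind : unit_interval -> Prop.
Variable f : elt -> unit_interval.
Hypothesis Hf : is_unit_rep P_lt kind f.

Let a (u : elt) : R := left_end (f u).

Lemma rep_lt u v : u <> v -> P_lt u v ->
  a u + 1 < a v \/ (a u + 1 = a v /\ (ropen (f u) = true \/ lopen (f v) = true)).
Proof.
  intros Huv Hlt; apply ui_before_iff, (proj2 Hf u v Huv), Hlt.
Qed.

Lemma rep_not_lt u v : u <> v -> ~ P_lt u v ->
  a v <= a u + 1 /\ (a v = a u + 1 -> ropen (f u) = false /\ lopen (f v) = false).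
Proof.
  intros Huv Hnlt; unfold a.
  assert (Hnb : ~ ui_before (f u) (f v))
    by (intros Hb; apply Hnlt, (proj2 Hf u v Huv), Hb).
  rewrite ui_before_iff in Hnb; split.
  - apply Rnot_lt_le; intros Hgap; apply Hnb; left; lra.
  - intros Htouch.
    destruct (ropen (f u)), (lopen (f v)); auto; exfalso; apply Hnb; right; split; auto.
Qed.

Lemma P_rep_x3_half_open : lopen (f x3) = false /\ ropen (f x3) = true.
Proof.
  (* a4 <= az + 1 <= ay + 2 <= a1 + 3 <= a2 + 2 <= a3 + 1 <= a4 *)
  destruct (rep_not_lt z x4 ltac:(discriminate) (fun h => h)) as [Hz4 Ez4].
  destruct (rep_not_lt y z ltac:(discriminate) (fun h => h)) as [Hyz _].
  destruct (rep_not_lt x1 y ltac:(discriminate) (fun h => h)) as [H1y _].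
  destruct (rep_not_lt y x3 ltac:(discriminate) (fun h => h)) as [Hy3 Ey3].
  destruct (rep_lt x1 x2 ltac:(discriminate) I) as [H12|[H12 _]];
  destruct (rep_lt x2 x3 ltac:(discriminate) I) as [H23|[H23 _]];
  destruct (rep_lt x3 x4 ltac:(discriminate) I) as [H34|[H34 Hflags]];
  try lra.
  (* so the chain is tight: the touching endpoints are shared *)
  destruct (Ez4 ltac:(lra)) as [_ Hl4].
  destruct (Ey3 ltac:(lra)) as [_ Hl3].
  destruct Hflags as [Hr3|Hl4']; [auto | congruence].
Qed.

End RepresentationsOfP.

Lemma P_not_unit_OC : ~ unit_OC_interval_order P_lt.
Proof.
  intros [f Hf].
  destruct (P_rep_x3_half_open oc_kind f Hf) as [Hl3 Hr3].
  destruct (proj1 Hf x3) as [[_ Hr3']|[Hl3' _]]; congruence.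
Qed.

Lemma P_mixed_rep_correct : is_unit_rep P_lt mixed_kind P_mixed_rep.
Proof.
  split; [intros; exact I|].
  intros u v Huv; rewrite ui_before_iff.
  destruct u, v; cbn; try congruence;
    split; intros H; intuition (try lra; try discriminate).
Qed.

Theorem mainTheorem5 :
  ~ unit_OC_interval_order P_lt /\
  has_unit_mixed_rep P_lt /\
  is_unit_rep P_lt mixed_kind P_mixed_rep.
Proof.
  split; [exact P_not_unit_OC|].
  split; [exists P_mixed_rep|]; exact P_mixed_rep_correct.
Qed.
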